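(* Let $n \ge 3$. (i) Every $(n-1)$-limited rigid word is an isoterm for $\mathbf{A}_n$; in particular every word in $\mathsf{B}_n$ is an isoterm for $\mathbf{A}_n$. (ii) Every $(n-2)$-limited rigid word is an isoterm for $\mathbf{A}_n\{\mathtt{B}_n\}$.
   Context: All varieties are varieties of monoids (signature: associative binary operation and identity constant $1$). Words are elements of the free monoid $X^*$ over a countably infinite set $X$ of variables; identities are pairs of words, and variables may be substituted by $1$. For a variety $\mathbf{V}$ and set $\Sigma$ of identities, $\mathbf{V}\Sigma$ is the subvariety of $\mathbf{V}$ defined by $\Sigma$. $\mathbf{O}$ is the variety defined by $xyt_1xt_2y \approx yxt_1xt_2y$, $xt_1xyt_2y \approx xt_1yxt_2y$, $xt_1yt_2xy \approx xt_1yt_2yx$. For $n\ge3$, $\mathtt{A}_n$ is $x^n t_1\cdots t_n \approx t_1x\,t_2x\cdots t_nx$, $\mathtt{B}_n$ is the set of identities $x^{n-1}t \approx x^{n-2}tx \approx\cdots\approx xtx^{n-2}\approx tx^{n-1}$, $\mathbf{A}_n=\mathbf{O}\{\mathtt{A}_n\}$, and $\mathsf{B}_n=\{x^{n-1-j}tx^{j}:0\le j\le n-1\}$. A rigid word is a word $x^{e_0}t_1x^{e_1}t_2x^{e_2}\cdots t_rx^{e_r}$ with $r\ge0$, $e_i\ge0$, and $x,t_1,\dots,t_r$ distinct variables; it is $k$-limited if $e_0+\cdots+e_r\le k$. A word $\mathbf{w}$ is an isoterm for a variety $\mathbf{V}$ if $\mathbf{V}$ satisfies no identity $\mathbf{w}\approx\mathbf{v}$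 with $\mathbf{v}\ne\mathbf{w}$. *)

From mathcomp Require Import all_boot.
Set Implicit Arguments. Unset Strict Implicit. Unset Printing Implicit Defensive.

Definition word := seq nat.
Definition identity := (word * word)%type.

(* Value of a word in a monoid (M, op, e) under an assignment s : X -> M.
   Variables may be sent to the identity e, i.e. substituted by 1. *)
Definition eval (M : Type) (op : M -> M -> M) (e : M) (s : nat -> M) (w : word) : M :=
  foldr (fun x acc => op (s x) acc) e w.

Definition is_monoid (M : Type) (op : M -> M -> M) (e : M) : Prop :=
  associative op /\ left_id e op /\ right_id e op.

Definition sat_id (M : Type) (op : M -> M -> M) (e : M) (u v : word) : Prop :=
  forall s : nat -> M, eval op e s u = eval op e s v.

Definition in_variety (Sigma : identity -> Prop) (M : Type) (op : M -> M -> M) (e : M) : Prop :=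
  is_monoid op e /\ forall u v, Sigma (u, v) -> sat_id op e u v.

Definition var_sat (Sigma : identity -> Prop) (u v : word) : Prop :=
  forall (M : Type) (op : M -> M -> M) (e : M), in_variety Sigma op e -> sat_id op e u v.

Definition isoterm (Sigma : identity -> Prop) (w : word) : Prop :=
  forall v : word, var_sat Sigma w v -> v = w.

(* Identities defining O, with x = 0, y = 1, t1 = 2, t2 = 3. *)
Definition O_ids (p : identity) : Prop :=
  p = ([:: 0; 1; 2; 0; 3; 1], [:: 1; 0; 2; 0; 3; 1]) \/
  p = ([:: 0; 2; 0; 1; 3; 1], [:: 0; 2; 1; 0; 3; 1]) \/
  p = ([:: 0; 2; 1; 3; 0; 1], [:: 0; 2; 1; 3; 1; 0]).

(* A_n : x^n t1 ... tn ~ t1 x t2 x ... tn x, with x = 0, t_i = i. *)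
Definition A_id (n : nat) : identity :=
  (nseq n 0 ++ iota 1 n, flatten [seq [:: i; 0] | i <- iota 1 n]).

(* x^(n-1-j) t x^j, with x = 0, t = 1 (the words of the set B_n). *)
Definition Bword (n j : nat) : word := nseq (n - 1 - j) 0 ++ 1 :: nseq j 0.

Definition B_ids (n : nat) (p : identity) : Prop :=
  exists2 j, j < n - 1 & p = (Bword n j, Bword n j.+1).

Definition An_ids (n : nat) (p : identity) : Prop := O_ids p \/ p = A_id n.

Definition AnBn_ids (n : nat) (p : identity) : Prop := An_ids n p \/ B_ids n p.

(* The rigid word x^e0 t1 x^e1 ... tr x^er, where es = [:: e0; ...; er]. *)
Definition rigid_of (x : nat) (ts es : seq nat) : word :=
  nseq (head 0 es) x ++ flatten [seq t.1 :: nseq t.2 x | t <- zip ts (behead es)].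

Definition limited_rigid (k : nat) (w : word) : Prop :=
  exists (x : nat) (ts es : seq nat),
    [/\ uniq (x :: ts), size es = (size ts).+1, sumn es <= k & w = rigid_of x ts es].

From mathcomp Require Import all_boot.
From mathcomp Require Import zify.
Set Implicit Arguments. Unset Strict Implicit. Unset Printing Implicit Defensive.

(* For k >= 1 consider the Rees quotient of the free monoid by the ideal of
   words in which some letter occurs more than k times or two distinct letters
   occur at least twice.  It satisfies the identities of O: if the values of x
   and y both occur twice in a nonzero product, they are powers of a single
   letter and commute.  It satisfies A_n when k < n and B_n when k < n - 1: a
   nonempty value of x makes both sides zero, and an empty one makes both sides
   equal.  A k-limited rigid word is nonzero in this monoid, so evaluating it
   at the letters themselves shows that it is an isoterm. *)

Definition admissible (k : nat) (w : word) : bool :=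
  all (fun c => count_mem c w <= k) w &&
  all (fun c => all (fun d => (count_mem c w < 2) || (count_mem d w < 2) || (c == d)) w) w.

Lemma admissibleP k w :
  reflect ((forall c, count_mem c w <= k) /\
           (forall c d, 1 < count_mem c w -> 1 < count_mem d w -> c = d))
          (admissible k w).
Proof.
apply: (iffP andP) => -[Hk H1]; split.
- move=> c; case: (boolP (c \in w)) => [cw|/count_memPn-> //].
  exact: (allP Hk).
- move=> c d hc hd.
  have cw : c \in w by rewrite -has_pred1 has_count; lia.
  have dw : d \in w by rewrite -has_pred1 has_count; lia.
  by move: (allP (allP H1 c cw) d dw) => /orP[/orP[]|/eqP] //; lia.
- by apply/allP => c _.
- apply/allP => c _; apply/allP => d _.
  case: ltnP => //= hc; case: ltnP => //= hd.
  by rewrite (H1 c d hc hd) eqxx.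
Qed.

Lemma admissible_sub k u w :
  (forall c, count_mem c u <= count_mem c w) -> admissible k w -> admissible k u.
Proof.
move=> le_uw /admissibleP[Hk H1]; apply/admissibleP; split.
  by move=> c; apply: leq_trans (le_uw c) (Hk c).
by move=> c d hc hd; apply: H1; apply: leq_trans (le_uw _); [exact: hc|exact: hd].
Qed.

Lemma admissible_catl k u v : admissible k (u ++ v) -> admissible k u.
Proof. by apply: admissible_sub => c; rewrite count_cat leq_addr. Qed.

Lemma admissible_catr k u v : admissible k (u ++ v) -> admissible k v.
Proof. by apply: admissible_sub => c; rewrite count_cat leq_addl. Qed.

(* The representative of the zero of the Rees quotient. *)
Definition zero_word : word := [:: 0; 0; 1; 1].

Lemma admissible_zero_word k : admissible k zero_word = false.
Proof. by apply/admissibleP => -[_ H]; have := H 0 1 isT isT. Qed.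

Definition rees (k : nat) (w : word) : word :=
  if admissible k w then w else zero_word.

Lemma rees_id k w : rees k (rees k w) = rees k w.
Proof. by rewrite /rees; case: (boolP (admissible k w)) => h; rewrite ?h ?admissible_zero_word. Qed.

Lemma rees_catr k u v : rees k (u ++ rees k v) = rees k (u ++ v).
Proof.
rewrite /rees; case: (boolP (admissible k v)) => // hv.
have -> : admissible k (u ++ zero_word) = false.
  by apply/negP => /admissible_catr; rewrite admissible_zero_word.
by case: ifP => // /admissible_catr; rewrite (negbTE hv).
Qed.

Lemma rees_catl k u v : rees k (rees k u ++ v) = rees k (u ++ v).
Proof.
rewrite /rees; case: (boolP (admissible k u)) => // hu.
have -> : admissible k (zero_word ++ v) = false.
  by apply/negP => /admissible_catl; rewrite admissible_zero_word.
by case: ifP => // /admissible_catl; rewrite (negbTE hu).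
Qed.

Lemma rees_zero k a w : k < count_mem a w -> rees k w = zero_word.
Proof. by move=> ka; rewrite /rees; case: admissibleP => // -[Hk _]; have := Hk a; lia. Qed.

Lemma rees_eq k u v :
  (admissible k u -> u = v) -> (admissible k v -> u = v) -> rees k u = rees k v.
Proof.
rewrite /rees; case hu: (admissible k u); case hv: (admissible k v) => H1 H2 //.
- exact: H1.
- by move: hv; rewrite -(H1 isT) hu.
- by move: hu; rewrite (H2 isT) hv.
Qed.

Section ReesMonoid.

Variable k : nat.

Definition Rees := {w : word | rees k w == w}.

Definition rees_elt (w : word) : Rees := exist _ (rees k w) (introT eqP (rees_id k w)).

Definition rees_mul (a b : Rees) : Rees := rees_elt (sval a ++ sval b).

Definition rees_one : Rees := exist _ [::] (eqxx [::]).

Lemma Rees_inj (a b : Rees) : sval a = sval b -> a = b.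
Proof. by case: a b => [a pa] [b pb] /= eab; subst; congr exist; apply: eq_irrelevance. Qed.

Lemma Rees_monoid : is_monoid rees_mul rees_one.
Proof.
split; [|split].
- by move=> a b c; apply: Rees_inj => /=; rewrite rees_catl rees_catr catA.
- by move=> [a pa]; apply: Rees_inj; rewrite /= (eqP pa).
- by move=> [a pa]; apply: Rees_inj; rewrite /= cats0 (eqP pa).
Qed.

Lemma val_eval_rees (s : nat -> Rees) u :
  sval (eval rees_mul rees_one s u) = rees k (flatten [seq sval (s x) | x <- u]).
Proof. by elim: u => //= x u IH; rewrite IH rees_catr. Qed.

(* An identity holds in [Rees] iff it holds after every substitution into the
   free monoid followed by [rees]. *)
Definition rees_sat (u v : word) : Prop :=
  forall f : nat -> word, rees k (flatten (map f u)) = rees k (flatten (map f v)).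

Lemma Rees_in_variety (Sigma : identity -> Prop) :
  (forall u v, Sigma (u, v) -> rees_sat u v) -> in_variety Sigma rees_mul rees_one.
Proof.
move=> HS; split; first exact: Rees_monoid.
move=> u v /HS Huv s; apply: Rees_inj; rewrite !val_eval_rees; exact: Huv.
Qed.

Lemma isoterm_admissible (Sigma : identity -> Prop) w :
  0 < k -> admissible k w -> in_variety Sigma rees_mul rees_one -> isoterm Sigma w.
Proof.
move=> k_gt0 aw HV v /(_ _ _ _ HV (fun x => rees_elt [:: x])) /(congr1 sval).
have letter x : rees k [:: x] = [:: x] by rewrite /rees /admissible /= eqxx k_gt0.
have flatten_letters (t : word) : flatten [seq rees k [:: x] | x <- t] = t.
  by elim: t => //= x t ->; rewrite letter.
rewrite !val_eval_rees /= !flatten_letters /rees aw.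
by case: ifP => // _ Ew; move: aw; rewrite Ew admissible_zero_word.
Qed.

End ReesMonoid.

Lemma admissible_commute k w p q : admissible k w ->
  (forall c, 2 * count_mem c p <= count_mem c w) ->
  (forall c, 2 * count_mem c q <= count_mem c w) -> p ++ q = q ++ p.
Proof.
move=> /admissibleP[_ H1].
case: p => [|a p] hp; first by rewrite cats0.
case: q => [|b q] hq; first by rewrite cats0.
have ha : 1 < count_mem a w by have := hp a; rewrite /= eqxx; lia.
have all_a : all (pred1 a) ((a :: p) ++ (b :: q)).
  apply/allP => c cpq.
  have : 0 < count_mem c ((a :: p) ++ (b :: q)) by rewrite -has_count has_pred1.
  rewrite count_cat => hc; apply/eqP; apply: H1 ha.
  by have := hp c; have := hq c; lia.
have all_a' : all (pred1 a) ((b :: q) ++ (a :: p)) by rewrite all_cat andbC -all_cat.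
by rewrite (all_pred1P _ _ all_a) (all_pred1P _ _ all_a') !size_cat addnC.
Qed.

Lemma rees_sat_O k u v : O_ids (u, v) -> rees_sat k u v.
Proof.
case=> [|[|]] [-> ->] f /=; apply: rees_eq => aw;
  have C : f 0 ++ f 1 = f 1 ++ f 0 by
    apply: (admissible_commute aw) => c; rewrite !count_cat; lia.
all: by rewrite (catA (f 0) (f 1)) C -catA.
Qed.

Lemma count_flatten_map (f : nat -> word) (a x : nat) (w : word) :
  count_mem x w * count_mem a (f x) <= count_mem a (flatten (map f w)).
Proof.
elim: w => //= y w IH; rewrite count_cat mulnDl.
by case: (eqVneq y x) => [->|_]; rewrite /= ?eqxx ?mul1n ?mul0n ?add0n; lia.
Qed.

Lemma flatten_map_filter (f : nat -> word) (x : nat) (w : word) : f x = [::] ->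
  flatten (map f [seq y <- w | y != x]) = flatten (map f w).
Proof. by move=> fx; elim: w => //= y w; case: eqVneq => [->|_] /= ->; rewrite ?fx. Qed.

Lemma rees_sat_heavy_letter k x u v :
  k < count_mem x u -> k < count_mem x v ->
  [seq y <- u | y != x] = [seq y <- v | y != x] -> rees_sat k u v.
Proof.
move=> ku kv erase_uv f; case E: (f x) => [|a r].
  by rewrite -(flatten_map_filter u E) -(flatten_map_filter v E) erase_uv.
have fa : 0 < count_mem a (f x) by rewrite E /= eqxx.
rewrite !(@rees_zero k a) //.
- by have := @count_flatten_map f a x v; nia.
- by have := @count_flatten_map f a x u; nia.
Qed.

Lemma rees_sat_A k n : k < n -> rees_sat k (A_id n).1 (A_id n).2.
Proof.
move=> kn; have x_iota : 0 \notin iota 1 n by rewrite mem_iota.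
have count_interleave t :
  count_mem 0 (flatten [seq [:: i; 0] | i <- t]) = size t + count_mem 0 t.
  by elim: t => //= i t ->; case: i => /=; lia.
have erase_interleave t :
  [seq y <- flatten [seq [:: i; 0] | i <- t] | y != 0] = [seq y <- t | y != 0].
  by elim: t => //= -[|i] t ->.
apply: (@rees_sat_heavy_letter _ 0) => /=.
- by rewrite count_cat count_nseq /= (count_memPn x_iota); lia.
- by rewrite count_interleave size_iota; lia.
- by rewrite filter_cat filter_nseq erase_interleave.
Qed.

Lemma rees_sat_B k n u v : k < n - 1 -> B_ids n (u, v) -> rees_sat k u v.
Proof.
move=> kn [j jn [-> ->]].
have count_B i : i <= n - 1 -> count_mem 0 (Bword n i) = n - 1.
  by move=> hi; rewrite /Bword count_cat /= !count_nseq /=; lia.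
apply: (@rees_sat_heavy_letter _ 0); rewrite ?count_B //; try lia.
by rewrite /Bword !filter_cat /= !filter_nseq.
Qed.

Lemma count_rigid_of x ts es a : size es = (size ts).+1 ->
  count_mem a (rigid_of x ts es) = (x == a) * sumn es + count_mem a ts.
Proof.
case: es => [|e es] //= [hs]; rewrite /rigid_of /= count_cat count_nseq.
have count_tail ts' es' : size es' = size ts' ->
    count_mem a (flatten [seq t.1 :: nseq t.2 x | t <- zip ts' es']) =
    (x == a) * sumn es' + count_mem a ts'.
  elim: ts' es' => [|t ts' IH] [|e' es'] //=; first by rewrite muln0.
  by move=> [hs']; rewrite count_cat /= count_nseq IH //=; lia.
by rewrite count_tail //=; lia.
Qed.

Lemma admissible_limited_rigid k w : 0 < k -> limited_rigid k w -> admissible k w.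
Proof.
move=> k_gt0 [x [ts [es [/= /andP[xts uts] hs hk ->]]]].
have count_ts a : count_mem a ts <= 1 by rewrite count_uniq_mem //; case: (a \in ts).
have repeated_x c : 1 < count_mem c (rigid_of x ts es) -> c = x.
  rewrite count_rigid_of //; case: eqVneq => [->|_] //=.
  by rewrite mul0n add0n ltnNge count_ts.
apply/admissibleP; split; last by move=> c d /repeated_x-> /repeated_x->.
move=> c; rewrite count_rigid_of //; case: eqVneq => [<-|_] /=.
  by rewrite (count_memPn xts) mul1n addn0.
by rewrite mul0n add0n (leq_trans (count_ts c)).
Qed.

Lemma Bword_limited_rigid n j : j <= n - 1 -> limited_rigid (n - 1) (Bword n j).
Proof.
move=> jn; exists 0, [:: 1], [:: n - 1 - j; j]; split => //=; first by lia.
by rewrite /rigid_of /Bword /= cats0.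
Qed.

Theorem lemma3p2 (n : nat) (hn : 3 <= n) :
  ((forall w : word, limited_rigid (n - 1) w -> isoterm (An_ids n) w) /\
   (forall j : nat, j <= n - 1 -> isoterm (An_ids n) (Bword n j))) /\
  (forall w : word, limited_rigid (n - 2) w -> isoterm (AnBn_ids n) w).
Proof.
have An_sat k : k < n -> forall u v, An_ids n (u, v) -> rees_sat k u v.
  by move=> kn u v [/rees_sat_O //|[-> ->]]; apply: rees_sat_A.
have part1 w : limited_rigid (n - 1) w -> isoterm (An_ids n) w.
  move=> hw; have k_gt0 : 0 < n - 1 by lia.
  apply: isoterm_admissible k_gt0 (admissible_limited_rigid k_gt0 hw) _.
  by apply: Rees_in_variety; apply: An_sat; lia.
split; first by split=> [//|j /Bword_limited_rigid]; apply: part1.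
move=> w hw; have k_gt0 : 0 < n - 2 by lia.
apply: isoterm_admissible k_gt0 (admissible_limited_rigid k_gt0 hw) _.
apply: Rees_in_variety => u v [/An_sat|/rees_sat_B]; apply; lia.
Qed.
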